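(* Let $d$ be an odd integer, $d\ge 3$, and let $G=\langle\sigma,\tau\rangle$ be the dihedral group with $\tau$ of order $d$, $\sigma$ of order $2$ and $\sigma\tau=\tau^{-1}\sigma$. In $\mathbb{Z}[G]$ put $T_\sigma=1+\sigma$, $T_\tau=\sum_{i=0}^{d-1}\tau^i$, $\mathcal{B}=1-\sigma\tau$, and consider the left ideals (left $\mathbb{Z}[G]$-modules) $M_1=\mathbb{Z}[G]T_\sigma T_\tau$, $M_2=\mathbb{Z}[G]T_\sigma$, $M_3=\mathbb{Z}[G]\mathcal{B}$, $M_4=\mathbb{Z}[G]\mathcal{B}T_\tau$, with maps $d_1:M_1\to M_2$ the inclusion, $d_2:M_2\to M_3$, $x\mapsto x(1-\tau)$, $d_3:M_3\to M_4$, $x\mapsto xT_\tau$, and homotopies $h_1:M_2\to M_1$, $x\mapsto xT_\tau$, $h_2:M_3\to M_2$ given by $h_2(x\mathcal{B})=x\sum_{i=0}^{d-1}\big(\tfrac{d-1}{2}-i\big)\tau^iT_\sigma$ for $x\in\mathbb{Z}[G]$, and $h_3:M_4\to M_3$ the inclusion. Then $0\to M_1\xrightarrow{d_1}M_2\xrightarrow{d_2}M_3\xrightarrow{d_3}M_4\to0$ is exact, all of $d_1,d_2,d_3,h_1,h_2,h_3$ are well-defined $\mathbb{Z}[G]$-module homomorphisms, and the prism conditions hold: $h_1d_1=d\cdot\mathrm{id}_{M_1}$, $d_1h_1+h_2d_2=d\cdot\mathrm{id}_{M_2}$, $d_2h_2+h_3d_3=d\cdot\mathrm{id}_{M_3}$,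 $d_3h_3=d\cdot\mathrm{id}_{M_4}$. *)

(* Integral group ring Z[G] of a finite group gT, realised as
   integer-valued finite functions on gT with convolution product. *)
From HB Require Import structures.
From mathcomp Require Import all_boot all_order all_algebra all_fingroup.
Set Implicit Arguments. Unset Strict Implicit. Unset Printing Implicit Defensive.
Import GRing.Theory Num.Theory.
Local Open Scope ring_scope.

Notation ZG gT := {ffun gT -> int}.

Definition gelt (gT : finGroupType) (g : gT) : ZG gT :=
  [ffun x => ((x == g) : nat)%:Z].

Definition gmul (gT : finGroupType) (a b : ZG gT) : ZG gT :=
  [ffun g => \sum_(h : gT) a h * b ((h^-1 * g)%g)].

Definition lideal (gT : finGroupType) (b : ZG gT) (x : ZG gT) : Prop :=
  exists y : ZG gT, x = gmul y b.

Definition ZGhom (gT : finGroupType) (A B : ZG gT -> Prop) (f : ZG gT -> ZG gT)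
  : Prop :=
  (forall x, A x -> B (f x)) /\
  (forall a x y, A x -> A y -> f (gmul a x + y) = gmul a (f x) + f y).

Section Elements.
Variables (gT : finGroupType) (d : nat) (sigma tau : gT).
Definition Tsig : ZG gT := gelt 1%g + gelt sigma.
Definition Ttau : ZG gT := \sum_(i < d) gelt (tau ^+ i)%g.
Definition Bel : ZG gT := gelt 1%g - gelt (sigma * tau)%g.
Definition Kel : ZG gT :=
  \sum_(i < d) (gmul (gelt (tau ^+ i)%g) Tsig) *~ (((d.-1)./2)%:Z - (i : nat)%:Z).
End Elements.

(* Every map is right multiplication by an element of Z[G] (h2 sends x B to
   x K), so the homomorphism and prism claims are identities in Z[G].  With
   d = 2m+1 and Q = sum_(i<d) (m-i) tau^i, the element K defining h2 is
   Q T_sigma, and Q - tau Q = d - T_tau, sigma Q sigma = - tau Q; hence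
   (sigma tau) K = -K, B K = 2 K, T_sigma K = d T_sigma - T_tau T_sigma and
   K (1 - tau) + B T_tau = d B.
   Exactness uses that Z[G] is free over Z[<tau>] (choose representatives of
   the cosets g<tau>): what tau fixes is a multiple of T_tau, and what T_tau
   kills is a multiple of 1 - tau.  For x in a kernel both d x and 2 x then
   lie in the image, hence so does x = d x - m (2 x). *)

From mathcomp Require Import all_boot all_order all_algebra all_fingroup.
From mathcomp Require Import cyclic zify.
Set Implicit Arguments. Unset Strict Implicit. Unset Printing Implicit Defensive.
Import GRing.Theory Num.Theory.
Local Open Scope ring_scope.

Section GroupRing.
Variable gT : finGroupType.
Implicit Types (a b c x y : ZG gT) (g h : gT).

Lemma geltE g h : gelt g h = ((h == g) : nat)%:Z.
Proof. by rewrite ffunE. Qed.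

Lemma gmulE a b g : gmul a b g = \sum_h a h * b (h^-1 * g)%g.
Proof. by rewrite ffunE. Qed.

Lemma gmul_gelt_l h b g : gmul (gelt h) b g = b (h^-1 * g)%g.
Proof.
rewrite gmulE (bigD1 h) //= geltE eqxx mul1r big1 ?addr0 // => k /negbTE nkh.
by rewrite geltE nkh mul0r.
Qed.

Lemma gmul_gelt_r a h g : gmul a (gelt h) g = a (g * h^-1)%g.
Proof.
rewrite gmulE (bigD1 (g * h^-1)%g) //= geltE invMg invgK -mulgA mulVg mulg1 eqxx mulr1.
rewrite big1 ?addr0 // => k nk; rewrite geltE.
case: eqP => [kgh|]; rewrite ?mulr0 //.
by rewrite -kgh invMg invgK mulKVg eqxx in nk.
Qed.

Lemma gmul_gelt g h : gmul (gelt g) (gelt h) = gelt (g * h)%g.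
Proof. by apply/ffunP => k; rewrite gmul_gelt_l !geltE (canF_eq (mulKVg g)). Qed.

Lemma gmul1l x : gmul (gelt 1%g) x = x.
Proof. by apply/ffunP => g; rewrite gmul_gelt_l invg1 mul1g. Qed.

Lemma gmul1r x : gmul x (gelt 1%g) = x.
Proof. by apply/ffunP => g; rewrite gmul_gelt_r invg1 mulg1. Qed.

Lemma gmulA a b c : gmul (gmul a b) c = gmul a (gmul b c).
Proof.
apply/ffunP => g; rewrite !gmulE.
under eq_bigr do rewrite gmulE mulr_suml.
rewrite exchange_big /=; apply: eq_bigr => h _.
rewrite gmulE mulr_sumr (reindex_inj (mulgI h)) /=.
by apply: eq_bigr => k _; rewrite mulKg mulrA invMg mulgA.
Qed.

Lemma gmulDl a b c : gmul (a + b) c = gmul a c + gmul b c.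
Proof.
apply/ffunP => g; rewrite !ffunE -big_split.
by apply: eq_bigr => h _; rewrite ffunE mulrDl.
Qed.

Lemma gmulDr a b c : gmul a (b + c) = gmul a b + gmul a c.
Proof.
apply/ffunP => g; rewrite !ffunE -big_split.
by apply: eq_bigr => h _; rewrite ffunE mulrDr.
Qed.

Lemma gmulzl a c (n : int) : gmul (a *~ n) c = gmul a c *~ n.
Proof.
apply/ffunP => g; rewrite ffunMzE !gmulE mulrzz mulr_suml.
by apply: eq_bigr => h _; rewrite ffunMzE mulrzz mulrAC.
Qed.

Lemma gmulzr a c (n : int) : gmul a (c *~ n) = gmul a c *~ n.
Proof.
apply/ffunP => g; rewrite ffunMzE !gmulE mulrzz mulr_suml.
by apply: eq_bigr => h _; rewrite ffunMzE mulrzz mulrA.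
Qed.

Lemma gmulNl a c : gmul (- a) c = - gmul a c.
Proof. by rewrite -mulrN1z gmulzl mulrN1z. Qed.

Lemma gmulNr a c : gmul a (- c) = - gmul a c.
Proof. by rewrite -mulrN1z gmulzr mulrN1z. Qed.

Lemma gmulBl a b c : gmul (a - b) c = gmul a c - gmul b c.
Proof. by rewrite gmulDl gmulNl. Qed.

Lemma gmulBr a b c : gmul a (b - c) = gmul a b - gmul a c.
Proof. by rewrite gmulDr gmulNr. Qed.

Lemma gmul0l c : gmul 0 c = 0.
Proof. by rewrite -(mulr0z 0) gmulzl !mulr0z. Qed.

Lemma gmul0r a : gmul a 0 = 0.
Proof. by rewrite -(mulr0z 0) gmulzr !mulr0z. Qed.

Lemma gmulnl a c n : gmul (a *+ n) c = gmul a c *+ n.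
Proof. by rewrite !pmulrn gmulzl. Qed.

Lemma gmulnr a c n : gmul a (c *+ n) = gmul a c *+ n.
Proof. by rewrite !pmulrn gmulzr. Qed.

Lemma gmul_suml I (r : seq I) (P : pred I) (F : I -> ZG gT) c :
  gmul (\sum_(i <- r | P i) F i) c = \sum_(i <- r | P i) gmul (F i) c.
Proof. by elim/big_rec2: _ => [|i y1 y2 _ <-]; rewrite ?gmul0l ?gmulDl. Qed.

Lemma gmul_sumr I (r : seq I) (P : pred I) (F : I -> ZG gT) a :
  gmul a (\sum_(i <- r | P i) F i) = \sum_(i <- r | P i) gmul a (F i).
Proof. by elim/big_rec2: _ => [|i y1 y2 _ <-]; rewrite ?gmul0r ?gmulDr. Qed.

Lemma ZGhom_lideal a b c (f : ZG gT -> ZG gT) :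
  (forall x, f (gmul x a) = gmul x c) -> lideal b c ->
  ZGhom (lideal a) (lideal b) f.
Proof.
move=> fE [e ce]; split=> [_ [y ->]|a' _ _ [x ->] [y ->]].
  by exists (gmul y e); rewrite fE ce gmulA.
by rewrite -gmulA -gmulDl !fE gmulDl gmulA.
Qed.

Lemma ZGhom_gmulr a b c :
  lideal b (gmul a c) -> ZGhom (lideal a) (lideal b) (fun x => gmul x c).
Proof. by apply: ZGhom_lideal => x; rewrite gmulA. Qed.

Lemma lideal_refl b : lideal b b.
Proof. by exists (gelt 1%g); rewrite gmul1l. Qed.

Lemma ZGhom_id a b : lideal b a -> ZGhom (lideal a) (lideal b) id.
Proof. exact: ZGhom_lideal. Qed.

(* If b c = 2 c, then for z = x b the coefficients of z c = 2 (x c) are even,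
   so x c is recovered from z without choosing a preimage x. *)
Definition half_gmul c z : ZG gT := [ffun g => (gmul z c g %/ 2)%Z].

Lemma half_gmul_lideal b c :
  gmul b c = c *+ 2 -> forall x, half_gmul c (gmul x b) = gmul x c.
Proof.
move=> bc x; apply/ffunP => g.
by rewrite ffunE gmulA bc gmulnr ffunMnE -[_ *+ 2]mulr_natr mulzK.
Qed.

End GroupRing.

Section CosetsOfCycle.
Variables (gT : finGroupType) (s : gT).
Local Open Scope group_scope.

Lemma lcoset_cycle_exp g h :
  h \in g *: <[s]> -> exists2 i, (i < #[s])%N & h = g * s ^+ i.
Proof. by rewrite mem_lcoset => /cyclePmin[i lt_i_s /(canRL (mulKVg g))]; exists i. Qed.

Lemma eq_mulg_expg g i j : (i < #[s])%N -> (j < #[s])%N ->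
  (g * s ^+ i == g * s ^+ j) = (i == j).
Proof. by move=> lt_i lt_j; rewrite (inj_eq (mulgI g)) eq_expg_mod_order !modn_small. Qed.

Definition cycle_repr g : gT := repr (g *: <[s]>).

Lemma cycle_repr_mem g : cycle_repr g \in g *: <[s]>.
Proof. exact: mem_repr (lcoset_refl _ g). Qed.

Lemma cycle_repr_mul g h : h \in <[s]> -> cycle_repr (g * h) = cycle_repr g.
Proof. by move=> hs; rewrite /cycle_repr lcosetM (lcoset_id hs). Qed.

Definition cycle_index g : nat :=
  find (fun i => g == cycle_repr g * s ^+ i) (iota 0 #[s]).

Lemma cycle_indexP g :
  (cycle_index g < #[s])%N /\ g = cycle_repr g * s ^+ cycle_index g.
Proof.
have /lcoset_cycle_exp[i lt_i_s gE] : g \in cycle_repr g *: <[s]>.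
  by rewrite (lcoset_eqP (cycle_repr_mem g)) lcoset_refl.
have has_i : has (fun i => g == cycle_repr g * s ^+ i) (iota 0 #[s]).
  by apply/hasP; exists i; rewrite ?mem_iota -?gE.
have lt_idx := has_i; rewrite has_find size_iota in lt_idx.
by split=> //; have /eqP := nth_find 0%N has_i; rewrite nth_iota ?add0n.
Qed.

Lemma cycle_index_uniq g i : (i < #[s])%N ->
  g = cycle_repr g * s ^+ i -> cycle_index g = i.
Proof.
move=> lt_i_s gE; have [lt_idx gE'] := cycle_indexP g.
by apply/eqP; rewrite -(eq_mulg_expg (cycle_repr g)) // -gE -gE'.
Qed.

Lemma cycle_invariant_sum (x : ZG gT) : (forall g, x (g * s) = x g) ->
  exists u : ZG gT, forall g, \sum_(k < #[s]) u (g * s ^+ k)%g = x g.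
Proof.
move=> xs; have xsX g k : x (g * s ^+ k) = x g.
  by elim: k => [|k IHk]; rewrite ?expg0 ?mulg1 // expgSr mulgA xs.
exists [ffun h => if cycle_repr h == h then x h else 0%R] => g.
have [j lt_j_s rE] := lcoset_cycle_exp (cycle_repr_mem g).
rewrite (bigD1 (Ordinal lt_j_s)) //= ffunE cycle_repr_mul ?mem_cycle // rE eqxx xsX.
rewrite big1 ?addr0 // => k nkj; rewrite ffunE cycle_repr_mul ?mem_cycle // rE.
by rewrite eq_mulg_expg // eq_sym ifN.
Qed.

Lemma cycle_sum0_coboundary (x : ZG gT) :
  (forall g, \sum_(k < #[s]) x (g * s ^+ k)%g = 0%R) ->
  exists v : ZG gT, forall g, v g - v (g * s) = x g.
Proof.
move=> x0.
exists [ffun g => - \sum_(k < cycle_index g) x (cycle_repr g * s ^+ k)%g]%R => g.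
rewrite !ffunE cycle_repr_mul ?cycle_id //.
have [lt_i gE] := cycle_indexP g.
set r := cycle_repr g in gE *; set i := cycle_index g in lt_i gE *.
have gsE : g * s = r * s ^+ i.+1 by rewrite {1}gE expgSr mulgA.
have [lt_i1 | ge_i1] := ltnP i.+1 #[s].
  rewrite (@cycle_index_uniq _ i.+1) ?cycle_repr_mul ?cycle_id //.
  by rewrite big_ord_recr /= -gE opprK addKr.
have iE : i.+1 = #[s] by apply/eqP; rewrite eqn_leq ge_i1 lt_i.
rewrite (@cycle_index_uniq _ 0) ?order_gt0 ?cycle_repr_mul ?cycle_id //; last first.
  by rewrite gsE iE expg_order expg0.
have := x0 r; rewrite -iE big_ord_recr /= -gE => /eqP; rewrite addr_eq0 => /eqP ->.
by rewrite big_ord0 oppr0 subr0 opprK.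
Qed.

End CosetsOfCycle.

Lemma gmul_Ttau_ffunE (gT : finGroupType) n (t : gT) (u : ZG gT) g :
  gmul u (Ttau n t) g = \sum_(k < n) u (g * t^-1 ^+ k)%g.
Proof.
by rewrite /Ttau gmul_sumr sum_ffunE; apply: eq_bigr => k _; rewrite gmul_gelt_r expVgn.
Qed.

Lemma lideal_norm_fixed (gT : finGroupType) (t : gT) (x : ZG gT) :
  gmul x (gelt t) = x -> lideal (Ttau #[t]%g t) x.
Proof.
move=> xt; have xs g : x (g * t^-1)%g = x g by rewrite -gmul_gelt_r xt.
have [u uE] := cycle_invariant_sum xs; exists u.
by apply/ffunP => g; rewrite gmul_Ttau_ffunE -uE orderV.
Qed.

Lemma lideal_diff_norm0 (gT : finGroupType) (t : gT) (x : ZG gT) :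
  gmul x (Ttau #[t]%g t) = 0 -> lideal (gelt 1%g - gelt t) x.
Proof.
move=> xN; have xs g : \sum_(k < #[t^-1]%g) x (g * t^-1 ^+ k)%g = 0.
  by rewrite orderV -gmul_Ttau_ffunE xN ffunE.
have [v vE] := cycle_sum0_coboundary xs; exists v.
by apply/ffunP => g; rewrite gmulBr gmul1r -vE !ffunE -gmulE gmul_gelt_r.
Qed.

Lemma mulrn_odd_sub (V : zmodType) (x : V) m : x *+ m.*2.+1 - x *+ 2 *+ m = x.
Proof. by rewrite -mulrnA mul2n mulrS addrK. Qed.

Section Dihedral.
Variables (gT : finGroupType) (m : nat) (sigma tau : gT).
Local Notation d := m.*2.+1.
Hypotheses (tau_order : #[tau]%g = d) (sigma_invol : (sigma * sigma = 1)%g)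
  (sigma_tau : (sigma * tau = tau^-1 * sigma)%g).

Local Notation Ts := (Tsig sigma).
Local Notation Tt := (Ttau d tau).
Local Notation B := (Bel sigma tau).
Local Notation D := (gelt 1%g - gelt tau).
Local Notation Q := (\sum_(i < d) gelt (tau ^+ i)%g *~ (m%:Z - i%:Z)).
Local Notation K := (Kel d sigma tau).

Lemma tau_exp_d : (tau ^+ d = 1)%g.
Proof. by rewrite -tau_order expg_order. Qed.

Lemma tauX_inv i : (i <= d)%N -> ((tau ^+ i)^-1 = tau ^+ (d - i))%g.
Proof. by move=> le_id; apply/eqP; rewrite eq_invg_mul -expgD subnKC ?tau_exp_d. Qed.

Lemma sigma_tauX_sigma i : (sigma * tau ^+ i * sigma = (tau ^+ i)^-1)%g.
Proof.
have sigmaV : sigma^-1%g = sigma by apply/eqP; rewrite eq_invg_mul sigma_invol.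
have tau_sigma : (tau ^ sigma = tau^-1)%g.
  by rewrite conjgE sigmaV mulgA sigma_tau -mulgA sigma_invol mulg1.
by have := conjXg tau sigma i; rewrite tau_sigma expVgn conjgE sigmaV mulgA.
Qed.

Lemma gelt_sigma_invol : gmul (gelt sigma) (gelt sigma) = gelt 1%g.
Proof. by rewrite gmul_gelt sigma_invol. Qed.

Lemma tau_Tt : gmul (gelt tau) Tt = Tt.
Proof.
rewrite /Ttau gmul_sumr; under eq_bigr do rewrite gmul_gelt -expgS.
by rewrite [RHS]big_ord_recl big_ord_recr /= tau_exp_d expg0 addrC.
Qed.

Lemma Tt_tau : gmul Tt (gelt tau) = Tt.
Proof.
rewrite /Ttau gmul_suml; under eq_bigr do rewrite gmul_gelt -expgSr.
by rewrite [RHS]big_ord_recl big_ord_recr /= tau_exp_d expg0 addrC.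
Qed.

Lemma tauX_Tt k : gmul (gelt (tau ^+ k)%g) Tt = Tt.
Proof.
by elim: k => [|k IHk]; rewrite ?expg0 ?gmul1l // expgS -gmul_gelt gmulA IHk tau_Tt.
Qed.

Lemma Tt_sq : gmul Tt Tt = Tt *+ d.
Proof.
rewrite {1}/Ttau gmul_suml; under eq_bigr do rewrite tauX_Tt.
by rewrite sumr_const card_ord.
Qed.

Lemma sigma_Tt : gmul (gelt sigma) Tt = gmul Tt (gelt sigma).
Proof.
suff sTts : gmul (gmul (gelt sigma) Tt) (gelt sigma) = Tt.
  by rewrite -{2}sTts gmulA gelt_sigma_invol gmul1r.
rewrite /Ttau gmul_sumr gmul_suml; under eq_bigr do rewrite !gmul_gelt sigma_tauX_sigma.
rewrite (reindex_inj rev_ord_inj) -[RHS]tau_Tt gmul_sumr; apply: eq_bigr => i _.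
by rewrite gmul_gelt -expgS /= tauX_inv ?leq_subr // subKn.
Qed.

Lemma Ts_Tt : gmul Ts Tt = gmul Tt Ts.
Proof. by rewrite gmulDl gmulDr gmul1l gmul1r sigma_Tt. Qed.

Lemma Ts_sigma : gmul Ts (gelt sigma) = Ts.
Proof. by rewrite gmulDl gmul1l gelt_sigma_invol addrC. Qed.

Lemma sigma_Ts : gmul (gelt sigma) Ts = Ts.
Proof. by rewrite gmulDr gmul1r gelt_sigma_invol addrC. Qed.

Lemma Ts_D : gmul Ts D = gmul Ts B.
Proof.
rewrite !gmulBr !gmul1r !gmulDl !gmul_gelt !mul1g mulgA sigma_invol mul1g.
by rewrite (addrC (gelt tau)).
Qed.

Lemma B_Tt : gmul B Tt = gmul Tt B.
Proof.
rewrite gmulBl gmulBr gmul1l gmul1r -gmul_gelt gmulA tau_Tt.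
by rewrite -[in RHS]gmulA -sigma_Tt gmulA Tt_tau.
Qed.

Lemma Tt_D : gmul Tt D = 0.
Proof. by rewrite gmulBr gmul1r Tt_tau subrr. Qed.

Lemma D_Tt : gmul D Tt = 0.
Proof. by rewrite gmulBl gmul1l tau_Tt subrr. Qed.

Lemma Kel_Q : K = gmul Q Ts.
Proof.
rewrite /Kel (_ : (d.-1)./2 = m) /= ?doubleK //.
by rewrite gmul_suml; apply: eq_bigr => i _; rewrite gmulzl.
Qed.

Lemma tau_Q : gmul (gelt tau) Q = gmul Q (gelt tau).
Proof.
rewrite gmul_sumr gmul_suml; apply: eq_bigr => i _.
by rewrite gmulzr gmulzl !gmul_gelt -expgS -expgSr.
Qed.

Lemma Q_sub_tau_Q : Q - gmul (gelt tau) Q = gelt 1%g *+ d - Tt.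
Proof.
pose F i := gelt (tau ^+ i)%g *~ (m%:Z - i%:Z).
have tauF i : gmul (gelt tau) (F i) = F i.+1 + gelt (tau ^+ i.+1)%g.
  rewrite /F gmulzr gmul_gelt -expgS.
  by rewrite (_ : m%:Z - i%:Z = m%:Z - i.+1%:Z + 1) ?mulrzDr ?mulr1z //; lia.
have F0_Fd : F 0%N - F d = gelt 1%g *+ d.
  by rewrite /F tau_exp_d expg0 -mulrzBr pmulrn; congr (_ *~ _); lia.
have shiftF : \sum_(i < d) F i.+1 = Q - gelt 1%g *+ d.
  have sumS : F 0%N + \sum_(0 <= i < d) F i.+1 = \sum_(0 <= i < d) F i + F d.
    by rewrite -big_nat_recl // big_nat_recr.
  rewrite !big_mkord in sumS.
  by rewrite -[LHS](addKr (F 0%N)) sumS addrCA [- F 0%N + _]addrC -opprB F0_Fd.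
have tauQ : gmul (gelt tau) Q = \sum_(i < d) F i.+1 + Tt.
  rewrite -tau_Tt !gmul_sumr -big_split; apply: eq_bigr => i _.
  by rewrite gmul_gelt -expgS; apply: tauF.
by rewrite tauQ shiftF opprD opprB addrA [Q + _]addrC subrK.
Qed.

Lemma sigma_Q_sigma : gmul (gmul (gelt sigma) Q) (gelt sigma) = - gmul (gelt tau) Q.
Proof.
rewrite !gmul_sumr gmul_suml -sumrN (reindex_inj rev_ord_inj); apply: eq_bigr => i _.
rewrite gmulzr gmulzl !gmul_gelt sigma_tauX_sigma /= tauX_inv ?leq_subr // subKn //.
rewrite gmulzr gmul_gelt -expgS -mulrNz; congr (_ *~ _).
by have := ltn_ord i; lia.
Qed.

Lemma sigma_tau_Q : gmul (gelt (sigma * tau)%g) Q = - gmul Q (gelt sigma).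
Proof.
rewrite -gmul_gelt gmulA -[gmul (gelt tau) Q]opprK -sigma_Q_sigma gmulNr.
by rewrite -!gmulA gelt_sigma_invol gmul1l.
Qed.

Lemma sigma_tau_K : gmul (gelt (sigma * tau)%g) K = - K.
Proof. by rewrite Kel_Q -gmulA sigma_tau_Q gmulNl gmulA sigma_Ts. Qed.

Lemma B_K : gmul B K = K *+ 2.
Proof. by rewrite gmulBl gmul1l sigma_tau_K opprK mulr2n. Qed.

Lemma Ts_K : gmul Ts K = Ts *+ d - gmul Tt Ts.
Proof.
have sQTs : gmul (gelt sigma) (gmul Q Ts) = - gmul (gmul (gelt tau) Q) Ts.
  by rewrite -gmulNl -sigma_Q_sigma !gmulA sigma_Ts.
by rewrite Kel_Q gmulDl gmul1l sQTs -gmulBl Q_sub_tau_Q gmulBl gmulnl gmul1l.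
Qed.

Lemma K_D : gmul K D + gmul B Tt = B *+ d.
Proof.
have QD : gmul Q D = gelt 1%g *+ d - Tt by rewrite gmulBr gmul1r -tau_Q Q_sub_tau_Q.
rewrite Kel_Q [gmul Q Ts]gmulDr gmul1r gmulDl QD -[gmul Q (gelt sigma)]opprK -sigma_tau_Q.
rewrite gmulNl gmulA QD.
by rewrite -{1}(gmul1l (_ - Tt)) -gmulBl gmulBr gmulnr gmul1r subrK.
Qed.

Lemma D_sigma_tau : gmul D (gelt (sigma * tau)%g) = - gmul (gelt sigma) D.
Proof.
have tst : (tau * (sigma * tau) = sigma)%g by rewrite sigma_tau mulgA mulgV mul1g.
by rewrite gmulBl gmulBr gmul1l gmul1r !gmul_gelt tst opprB.
Qed.

Lemma gmulTt_lideal a x : lideal (gmul a Tt) x -> gmul x Tt = x *+ d.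
Proof. by move=> [y ->]; rewrite !gmulA Tt_sq !gmulnr. Qed.

Lemma gmulTt_fixed x : gmul x (gelt tau) = x -> gmul x Tt = x *+ d.
Proof.
move=> xt; have xtX k : gmul x (gelt (tau ^+ k)%g) = x.
  by elim: k => [|k IHk]; rewrite ?expg0 ?gmul1r // expgSr -gmul_gelt -gmulA IHk xt.
by rewrite /Ttau gmul_sumr; under eq_bigr do rewrite xtX; rewrite sumr_const card_ord.
Qed.

Lemma exact_M2 x : lideal Ts x ->
  (gmul x D = 0 <-> exists y, lideal (gmul Ts Tt) y /\ y = x).
Proof.
move=> [y xE]; split=> [|[_ [[z ->] <-]]]; last by rewrite !gmulA Tt_D !gmul0r.
rewrite gmulBr gmul1r => /eqP; rewrite subr_eq0 => /eqP/esym xt.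
have [u xuT] : lideal Tt x by rewrite -tau_order; apply: lideal_norm_fixed.
have x_d : x *+ d = gmul y (gmul Ts Tt) by rewrite -gmulTt_fixed // xE gmulA.
have x_2 : x *+ 2 = gmul u (gmul Ts Tt).
  have xs : gmul x (gelt sigma) = x by rewrite xE gmulA Ts_sigma.
  by rewrite Ts_Tt -gmulA -xuT gmulDr gmul1r xs mulr2n.
exists x; split=> //; exists (y - u *+ m).
by rewrite gmulBl gmulnl -x_d -x_2 mulrn_odd_sub.
Qed.

Lemma exact_M3 x : lideal B x ->
  (gmul x Tt = 0 <-> exists y, lideal Ts y /\ gmul y D = x).
Proof.
move=> [y xE]; split=> [xTt|[_ [[z ->] <-]]]; last by rewrite !gmulA D_Tt !gmul0r.
have [v xvD] : lideal D x by apply: lideal_diff_norm0; rewrite tau_order.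
have x_st : gmul x (gelt (sigma * tau)%g) = - x.
  have st2 : (sigma * tau * (sigma * tau) = 1)%g.
    by rewrite {1}sigma_tau -!mulgA (mulgA sigma) sigma_invol mul1g mulVg.
  by rewrite xE gmulA gmulBl gmul1l gmul_gelt st2 -gmulNr opprB.
have x_2 : x *+ 2 = gmul (gmul v Ts) D.
  have x_s : x = gmul (gmul v (gelt sigma)) D.
    by rewrite -[LHS]opprK -x_st {1}xvD !gmulA D_sigma_tau gmulNr opprK.
  by rewrite mulr2n {1}xvD {1}x_s [gmul v Ts]gmulDr gmul1r gmulDl.
have x_d : x *+ d = gmul (gmul (gmul y Q) Ts) D.
  by rewrite xE -gmulnr -K_D gmulDr -[gmul y (gmul B Tt)]gmulA -xE xTt addr0 Kel_Q !gmulA.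
exists (gmul (gmul y Q) Ts - gmul v Ts *+ m); split.
  by exists (gmul y Q - v *+ m); rewrite gmulBl gmulnl.
by rewrite gmulBl gmulnl -x_d -x_2 mulrn_odd_sub.
Qed.

Lemma prism_M2 x : lideal Ts x -> gmul x Tt + half_gmul K (gmul x D) = x *+ d.
Proof.
move=> [y ->]; rewrite [gmul (gmul y Ts) D]gmulA Ts_D -[gmul y (gmul Ts B)]gmulA.
by rewrite half_gmul_lideal ?B_K // !gmulA Ts_K gmulBr gmulnr Ts_Tt addrC subrK.
Qed.

Lemma prism_M3 x : lideal B x -> gmul (half_gmul K x) D + gmul x Tt = x *+ d.
Proof. by move=> [y ->]; rewrite half_gmul_lideal ?B_K // !gmulA -gmulDr K_D gmulnr. Qed.

Lemma ZGhom_d1 : ZGhom (lideal (gmul Ts Tt)) (lideal Ts) id.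
Proof. by apply: ZGhom_id; rewrite Ts_Tt; exists Tt. Qed.

Lemma ZGhom_d2 : ZGhom (lideal Ts) (lideal B) (fun x => gmul x D).
Proof. by apply: ZGhom_gmulr; rewrite Ts_D; exists Ts. Qed.

Lemma ZGhom_h2 : ZGhom (lideal B) (lideal Ts) (half_gmul K).
Proof. by apply: ZGhom_lideal (half_gmul_lideal B_K) _; exists Q; apply: Kel_Q. Qed.

Lemma ZGhom_h3 : ZGhom (lideal (gmul B Tt)) (lideal B) id.
Proof. by apply: ZGhom_id; rewrite B_Tt; exists Tt. Qed.

End Dihedral.

Theorem theorem5p4 (gT : finGroupType) (d : nat) (sigma tau : gT)
  (hd_odd : odd d) (hd3 : (3 <= d)%N)
  (htau : #[tau]%g = d) (hsig : #[sigma]%g = 2%N)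
  (hrel : (sigma * tau = tau^-1 * sigma)%g)
  (hgen : <<[set sigma; tau]>>%g = [set: gT]) :
  let Ts := Tsig sigma in
  let Tt := Ttau d tau in
  let B := Bel sigma tau in
  let M1 := lideal (gmul Ts Tt) in
  let M2 := lideal Ts in
  let M3 := lideal B in
  let M4 := lideal (gmul B Tt) in
  let d1 := fun x : ZG gT => x in
  let d2 := fun x : ZG gT => gmul x (gelt 1%g - gelt tau) in
  let d3 := fun x : ZG gT => gmul x Tt in
  let h1 := fun x : ZG gT => gmul x Tt in
  let h3 := fun x : ZG gT => x in
  exists h2 : ZG gT -> ZG gT,
    (* h2 (x B) = x * sum_i ((d-1)/2 - i) tau^i T_sigma, for all x in Z[G] *)
    (forall x, h2 (gmul x B) = gmul x (Kel d sigma tau)) /\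
    (* well-defined Z[G]-module homomorphisms *)
    ZGhom M1 M2 d1 /\ ZGhom M2 M3 d2 /\ ZGhom M3 M4 d3 /\
    ZGhom M2 M1 h1 /\ ZGhom M3 M2 h2 /\ ZGhom M4 M3 h3 /\
    (* exactness of 0 -> M1 -> M2 -> M3 -> M4 -> 0 *)
    (forall x y, M1 x -> M1 y -> d1 x = d1 y -> x = y) /\
    (forall x, M2 x -> (d2 x = 0 <-> exists y, M1 y /\ d1 y = x)) /\
    (forall x, M3 x -> (d3 x = 0 <-> exists y, M2 y /\ d2 y = x)) /\
    (forall z, M4 z -> exists y, M3 y /\ d3 y = z) /\
    (* prism conditions *)
    (forall x, M1 x -> h1 (d1 x) = x *+ d) /\
    (forall x, M2 x -> d1 (h1 x) + h2 (d2 x) = x *+ d) /\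
    (forall x, M3 x -> d2 (h2 x) + h3 (d3 x) = x *+ d) /\
    (forall x, M4 x -> d3 (h3 x) = x *+ d).
Proof.
have [m dE] : exists m, d = m.*2.+1.
  by exists d./2; rewrite -{1}(odd_double_half d) hd_odd.
rewrite {}dE in htau *.
have sigma_invol : (sigma * sigma = 1)%g by rewrite -{1}(invg2id hsig) mulVg.
move=> Ts Tt B M1 M2 M3 M4 d1 d2 d3 h1 h3.
exists (half_gmul (Kel m.*2.+1 sigma tau)).
split; first by apply: half_gmul_lideal; apply: B_K.
split; first by apply: ZGhom_d1.
split; first by apply: ZGhom_d2.
split; first exact: ZGhom_gmulr (lideal_refl _).
split; first exact: ZGhom_gmulr (lideal_refl _).
split; first by apply: ZGhom_h2.
split; first by apply: ZGhom_h3.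
split; first by [].
split; first by move=> x; apply: exact_M2.
split; first by move=> x; apply: exact_M3.
split; first by move=> _ [y ->]; exists (gmul y B); split; [exists y | apply: gmulA].
split; first by move=> x; apply: gmulTt_lideal.
split; first by move=> x; apply: prism_M2.
split; first by move=> x; apply: prism_M3.
by move=> x; apply: gmulTt_lideal.
Qed.
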